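(* Fix $n$ and consider a model $\mathcal M$ with block hyper-$g$ prior (hyperparameter $2<a\le4$) on blocks $X_1,\dots,X_k$ ($X_j$ of size $n\times p_j$, $p=\sum_jp_j$) satisfying the block orthogonality condition. Its Bayes factor against the null (intercept-only) model $\mathcal M_0$ is $$BF(\mathcal M:\mathcal M_0)=\Big(\frac{a-2}{2}\Big)^k\int_{(0,1)^k}\prod_{j=1}^k(1-t_j)^{\frac{a+p_j}{2}-2}\Big(1-\sum_{j=1}^kt_jR_j^2\Big)^{-\frac{n-1}{2}}dt .$$ Then $BF(\mathcal M:\mathcal M_0)\to\infty$ (information consistency) under either of the following conditions: (1) $R^2=\sum_{j=1}^kR_j^2\to1$ and $n>k(a-2)+p+1$; (2) for some $i\in\{1,\dots,k\}$, $R_i^2\to1$ and $n\ge a+p_i-1$.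
   Context: Block hyper-$g$ prior: $y\mid\alpha,\beta,\sigma^2\sim N(\alpha\mathbf 1+X\beta,\sigma^2I)$, $X=(X_1,\dots,X_k)$ of full column rank; $\beta\mid g,\sigma^2\sim N(0,A\sigma^2)$ with $A$ block diagonal with blocks $g_j(X_j^TX_j)^{-1}$; $\pi(\alpha,\sigma^2)\propto1/\sigma^2$; $g_j$ independent with densities $\frac{a-2}{2}(1+g_j)^{-a/2}$. Block orthogonality condition: predictors and response centered, $X_i^TX_j=0$ for $i\neq j$. $R_j^2=y^TP_{X_j}y/y^Ty$ with $P_{X_j}$ the projection onto the column space of $X_j$; under block orthogonality $R^2=\sum_jR_j^2$ is the coefficient of determination. Information consistency means $BF(\mathcal M:\mathcal M_0)\to\infty$ whenever $R^2\to1$ for fixed $n$ (limits in the data). *)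

From HB Require Import structures.
From mathcomp Require Import all_boot all_order all_algebra.
From mathcomp Require Import all_classical all_reals all_analysis.
Set Implicit Arguments. Unset Strict Implicit. Unset Printing Implicit Defensive.
Import Order.TTheory GRing.Theory Num.Theory numFieldNormedType.Exports.
Local Open Scope classical_set_scope.
Local Open Scope ring_scope.

Fixpoint iter_int01 (R : realType) (k : nat) (F : seq R -> \bar R) : \bar R :=
  match k with
  | 0 => F [::]
  | k'.+1 => (\int[@lebesgue_measure R]_(t in `]0%R, 1%R[)
                 iter_int01 k' (fun s => F (t :: s)))%E
  end.

Definition bf_integrand (R : realType) (n k : nat) (a : R) (p : 'I_k -> nat)
  (r : 'I_k -> R) (t : seq R) : R :=
  (\prod_(j < k) ((1 - nth 0 t j) `^ ((a + (p j)%:R) / 2 - 2)))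
  * ((1 - \sum_(j < k) nth 0 t j * r j) `^ (- (n%:R - 1) / 2)).

(* Bayes factor BF(M : M_0) of the block hyper-g model under block
   orthogonality, as a function of the block coefficients R_j^2 = r j. *)
Definition BF (R : realType) (n k : nat) (a : R) (p : 'I_k -> nat)
  (r : 'I_k -> R) : \bar R :=
  (((a - 2) / 2) ^+ k)%:E * iter_int01 k (fun t => (bf_integrand n a p r t)%:E).

(* BF is bounded below by integrating its (nonnegative) integrand
   only over boxes on which it is easy to estimate.
   - If R^2 = 1 - s with s -> 0: on the corner box (1 - s, 1 - s/2)^k every
     factor 1 - t_j is comparable to s and 1 - sum_j t_j R_j^2 lies in [s, 2 s],
     so BF >= C s^((k (a - 2) + p + 1 - n) / 2), which blows up when
     n > k (a - 2) + p + 1.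
   - If R_i^2 -> 1: on the dyadic shells 2^-(l+1) < 1 - t_i < 2^-l (the other
     t_j in (0, 1/2)) with 2^-(l+1) >= 1 - R_i^2, the integrand is at least of
     order 1 / (1 - t_i) because n >= a + p_i - 1, so every shell contributes the
     same constant, and the number of such shells grows without bound. *)

From HB Require Import structures.
From mathcomp Require Import all_boot all_order all_algebra.
From mathcomp Require Import all_classical all_reals all_analysis.
From mathcomp Require Import measurable_realfun ring lra.
Set Implicit Arguments. Unset Strict Implicit. Unset Printing Implicit Defensive.
Import Order.TTheory GRing.Theory Num.Theory numFieldNormedType.Exports.
Local Open Scope classical_set_scope.
Local Open Scope ring_scope.

Section iterated_integral.
Context (R : realType).

(* The library's [ge0_le_integral] also asks for measurability, which an iterated
   integral of an arbitrary integrand need not have. *)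
Lemma ge0_le_integral_nonmeas d (T : measurableType d) (mu : {measure set T -> \bar R})
    (D : set T) (f g : T -> \bar R) :
  (forall x, D x -> 0 <= f x)%E -> (forall x, D x -> f x <= g x)%E ->
  (\int[mu]_(x in D) f x <= \int[mu]_(x in D) g x)%E.
Proof.
move=> f0 fg; have g0 x : D x -> (0 <= g x)%E by move=> Dx; exact: le_trans (f0 _ Dx) (fg _ Dx).
rewrite !ge0_integralE//; apply: ereal_sup_le => _ [h hf <-]; exists h => //= x.
by apply: le_trans (hf x) _; rewrite /patch; case: ifP => // /[1!inE]; exact: fg.
Qed.

Lemma iter_int01_ge0 k (F : seq R -> \bar R) :
  (forall t, 0 <= F t)%E -> (0 <= iter_int01 k F)%E.
Proof.
elim: k F => [|k IH] F F0 /=; first exact: F0.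
by apply: integral_ge0 => t _; exact: IH.
Qed.

Lemma le_iter_int01 k (F G : seq R -> \bar R) :
  (forall t, 0 <= F t)%E -> (forall t, F t <= G t)%E -> (iter_int01 k F <= iter_int01 k G)%E.
Proof.
elim: k F G => [|k IH] F G F0 FG /=; first exact: FG.
apply: ge0_le_integral_nonmeas => t _; first exact: iter_int01_ge0.
exact: IH.
Qed.

Lemma itv_indicE (al be x : R) : ((al < x < be)%R)%:R = (\1_(`]al, be[ : set R) x :> R).
Proof. by rewrite indicE mem_setE in_itv. Qed.

Lemma integral01_itv_indic (al be : R) : 0 <= al <= be -> be <= 1 ->
  (\int[@lebesgue_measure R]_(x in `]0%R, 1%R[) (\1_(`]al, be[ : set R) x)%:E =
   (be - al)%:E)%E.
Proof.
move=> /andP[al0 al_be] be1; rewrite integral_indic//= setIidl; last first.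
  move=> x /=; rewrite !in_itv/= => /andP[alx xbe].
  by rewrite (le_lt_trans al0 alx) (lt_le_trans xbe be1).
have [al_lt_be|] := ltP al be; first by rewrite lebesgue_measure_itv/= lte_fin al_lt_be -EFinD.
move=> be_le_al; have -> : be = al by apply/eqP; rewrite eq_le be_le_al al_be.
by rewrite set_itvoo0// measure0 subrr.
Qed.

(* Box bounds are indexed by [nat] rather than ['I_k] so that the induction over [k]
   can peel off the first coordinate by shifting indices. *)
Definition box_indic k (al be : nat -> R) (t : seq R) : R :=
  \prod_(j < k) ((al j < nth 0 t j < be j)%R)%:R.

Definition in_box k (al be : nat -> R) (t : seq R) : bool :=
  [forall j : 'I_k, al j < nth 0 t j < be j].

Lemma box_indicE k al be t : box_indic k al be t = (in_box k al be t)%:R.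
Proof.
rewrite /box_indic; have [inb|/forallPn[j /negbTE tj]] := boolP (in_box k al be t).
  by apply: big1 => j _; rewrite (forallP inb j).
by rewrite (bigD1 j)//= tj mul0r.
Qed.

Definition step_fun k N (c : nat -> R) (al be : nat -> nat -> R) (t : seq R) : R :=
  \sum_(l < N) c l * box_indic k (al l) (be l) t.

Lemma iter_int01_step_fun k N (c : nat -> R) (al be : nat -> nat -> R) :
  (forall l, 0 <= c l) -> (forall l j, 0 <= al l j <= be l j) -> (forall l j, be l j <= 1) ->
  iter_int01 k (fun t => (step_fun k N c al be t)%:E) =
  (\sum_(l < N) c l * \prod_(j < k) (be l j - al l j))%:E.
Proof.
elim: k N c al be => [|k IH] N c al be c0 al_be be1.
  by rewrite /= /step_fun; congr (_%:E); apply: eq_bigr => l _; rewrite /box_indic !big_ord0.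
have indic0 l x : 0 <= \1_(`]al l 0, be l 0[ : set R) x by rewrite indicE.
rewrite /=; under eq_integral => x _.
  have -> : (fun s => (step_fun k.+1 N c al be (x :: s))%:E) =
      (fun s => (step_fun k N (fun l => c l * \1_(`]al l 0, be l 0[ : set R) x)
                   (fun l j => al l j.+1) (fun l j => be l j.+1) s)%:E).
    apply: funext => s; congr (_%:E); apply: eq_bigr => l _.
    by rewrite /box_indic big_ord_recl /= itv_indicE mulrA.
  rewrite IH //; last by move=> l; rewrite mulr_ge0.
  rewrite -sumEFin; over.
rewrite /= ge0_integral_sum//; first last.
- move=> l x _; rewrite lee_fin mulr_ge0 ?mulr_ge0//.
  by apply: prodr_ge0 => j _; have /andP[_] := al_be l j.+1; rewrite subr_ge0.
- move=> l; apply/measurable_EFinP; apply: measurable_funM => //.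
  by apply: measurable_funM => //; exact: measurable_indic.
rewrite -sumEFin; apply: eq_bigr => l _.
have vol0 : 0 <= c l * \prod_(j < k) (be l j.+1 - al l j.+1).
  by rewrite mulr_ge0// prodr_ge0// => j _; have /andP[_] := al_be l j.+1; rewrite subr_ge0.
under eq_integral do rewrite mulrAC EFinM.
rewrite ge0_integralZl_EFin//; last by apply/measurable_EFinP; exact: measurable_indic.
rewrite integral01_itv_indic// -EFinM big_ord_recl /=.
by congr (_%:E); ring.
Qed.

Lemma step_fun_le k N (c : nat -> R) (al be : nat -> nat -> R) (F : R) t :
  (forall l, 0 <= c l) -> 0 <= F ->
  (forall l l' : 'I_N, in_box k (al l) (be l) t -> in_box k (al l') (be l') t -> l = l') ->
  (forall l : 'I_N, in_box k (al l) (be l) t -> c l <= F) ->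
  step_fun k N c al be t <= F.
Proof.
move=> c0 F0 disj cF; rewrite /step_fun.
under eq_bigr do rewrite box_indicE mulr_natr mulrb.
rewrite -big_mkcond /=; case: (pickP (fun l : 'I_N => in_box k (al l) (be l) t)) => [l0 inb0|none].
  by rewrite (big_pred1 l0) ?cF// => l; apply/idP/eqP => [inb|->//]; exact: disj.
by rewrite big_pred0.
Qed.

Lemma iter_int01_ge_boxes k N (F : seq R -> R) (c : nat -> R) (al be : nat -> nat -> R) :
  (forall t, 0 <= F t) -> (forall l, 0 <= c l) ->
  (forall l j, 0 <= al l j <= be l j) -> (forall l j, be l j <= 1) ->
  (forall t (l l' : 'I_N), in_box k (al l) (be l) t -> in_box k (al l') (be l') t -> l = l') ->
  (forall t (l : 'I_N), in_box k (al l) (be l) t -> c l <= F t) ->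
  ((\sum_(l < N) c l * \prod_(j < k) (be l j - al l j))%:E <= iter_int01 k (fun t => (F t)%:E))%E.
Proof.
move=> F0 c0 al_be be1 disj cF; rewrite -iter_int01_step_fun//.
apply: le_iter_int01 => t; rewrite lee_fin.
  by rewrite sumr_ge0// => l _; rewrite mulr_ge0// box_indicE.
by apply: step_fun_le => //; [exact: disj | exact: cF].
Qed.

End iterated_integral.

Section integrand_estimates.
Context (R : realType).

Lemma le0_ger_powR (r x y : R) : r <= 0 -> 0 < x -> x <= y -> y `^ r <= x `^ r.
Proof.
move=> r_le0 x_gt0 xy; have y_gt0 : 0 < y by exact: lt_le_trans xy.
rewrite -(opprK r) (powRN y) (powRN x) lef_pV2 ?posrE ?powR_gt0//.
by apply: (ge0_ler_powR _ (y:=y)) => //; rewrite ?oppr_ge0// nnegrE ltW.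
Qed.

Lemma ler_powR_norm (c v e : R) : 0 < c <= v -> v <= 1 -> c `^ `|e| <= v `^ e.
Proof.
move=> /andP[c_gt0 cv] v_le1; have v_gt0 : 0 < v by exact: lt_le_trans cv.
have [e_ge0|e_lt0] := leP 0 e.
  by rewrite ger0_norm//; apply: (ge0_ler_powR _ (y:=v)) => //; rewrite ?nnegrE ?ltW.
apply: (@le_trans _ _ 1).
  by rewrite -(powRr0 c) ger_powR// c_gt0 (le_trans cv).
by rewrite -(powRr0 v) ger_powR ?v_gt0// ltW.
Qed.

Lemma corner_box_estimate k (e : 'I_k -> R) (w s : R) (r : 'I_k -> R) (t : seq R) :
  0 < s -> w <= 0 -> (forall j, 0 <= r j) -> \sum_(j < k) r j = 1 - s ->
  in_box k (fun=> 1 - s) (fun=> 1 - s / 2) t ->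
  (\prod_(j < k) (2^-1 `^ `|e j| * s `^ e j)) * (2 * s) `^ w <=
  (\prod_(j < k) (1 - nth 0 t j) `^ e j) * (1 - \sum_(j < k) nth 0 t j * r j) `^ w.
Proof.
move=> s_gt0 w_le0 r0 sum_r /forallP inb.
apply: ler_pM.
- by apply: prodr_ge0 => j _; rewrite mulr_ge0 ?powR_ge0.
- exact: powR_ge0.
- apply: ler_prod => j _; rewrite mulr_ge0 ?powR_ge0//=.
  have /andP[tj_lo tj_hi] := inb j.
  have -> : 1 - nth 0 t j = s * ((1 - nth 0 t j) / s) by field; exact: lt0r_neq0.
  have q_ge0 : 0 <= (1 - nth 0 t j) / s by rewrite divr_ge0 ?ltW//; lra.
  rewrite (powRM _ (ltW s_gt0) q_ge0) mulrC ler_wpM2l ?powR_ge0// ler_powR_norm//.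
    by rewrite ler_pdivlMr// invr_gt0 ltr0n /=; lra.
  by rewrite ler_pdivrMr//; lra.
- (* the integrand's second factor is s + sum_j (1 - t_j) r_j, between s and 2 s *)
  have sum_eq : \sum_(j < k) (1 - nth 0 t j) * r j = 1 - s - \sum_(j < k) nth 0 t j * r j.
    by rewrite -sum_r -sumrB; apply: eq_bigr => j _; ring.
  have -> : 1 - \sum_(j < k) nth 0 t j * r j = s + \sum_(j < k) (1 - nth 0 t j) * r j.
    by rewrite sum_eq; ring.
  set S := \sum_(j < k) _.
  have S_ge0 : 0 <= S by apply: sumr_ge0 => j _; have /andP[_ ?] := inb j; rewrite mulr_ge0//; lra.
  have S_le : S <= s * (1 - s).
    rewrite -sum_r mulr_sumr; apply: ler_sum => j _; apply: ler_wpM2r => //.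
    by have /andP[? _] := inb j; lra.
  by apply: le0_ger_powR => //; nra.
Qed.

Lemma shell_box_estimate k (i : 'I_k) (e : 'I_k -> R) (w h : R) (r : 'I_k -> R) (t : seq R) :
  0 < h <= 1 -> w <= 0 -> e i + w <= -1 -> (forall j, 0 <= r j) -> \sum_(j < k) r j < 1 ->
  1 - r i <= h / 2 ->
  in_box k (fun j => if j == val i then 1 - h else 0)
           (fun j => if j == val i then 1 - h / 2 else 2^-1) t ->
  2 `^ w / h * \prod_(j < k) 2^-1 `^ `|e j| <=
  (\prod_(j < k) (1 - nth 0 t j) `^ e j) * (1 - \sum_(j < k) nth 0 t j * r j) `^ w.
Proof.
move=> /andP[h_gt0 h_le1] w_le0 ew r0 sum_r ri /forallP inb.
have /andP[ti_lo ti_hi] : 1 - h < nth 0 t i < 1 - h / 2 by have := inb i; rewrite eqxx.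
have tj j : j != i -> 0 < nth 0 t j < 2^-1 by move=> ji; have := inb j; rewrite !ifN.
set u := 1 - nth 0 t i; set D := 1 - \sum_(j < k) nth 0 t j * r j.
have u_gt0 : 0 < u by rewrite /u; lra.
have u_le1 : u <= 1 by rewrite /u; lra.
have sum_ti : 0 <= \sum_(j < k | j != i) nth 0 t j * r j.
  by apply: sumr_ge0 => j ji; have /andP[? _] := tj j ji; rewrite mulr_ge0//; lra.
have D_gt0 : 0 < D.
  rewrite /D subr_gt0; apply: le_lt_trans sum_r; apply: ler_sum => j _.
  rewrite ler_piMl//; have [->|ji] := eqVneq j i; first lra.
  by have /andP[? ?] := tj j ji; lra.
have D_le : D <= 2 * u.
  have ri_le1 : r i <= 1.
    by apply: le_trans (ltW sum_r); rewrite (bigD1 i)//= lerDl sumr_ge0.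
  have := r0 i; rewrite /D (bigD1 i)//= /u in u_gt0 ti_lo ti_hi *; nra.
(* the exponent e_i + w <= -1 makes the integrand at least 1 / u on the shell *)
have key : 2 `^ w / h <= u `^ e i * D `^ w.
  apply: (@le_trans _ _ (2 `^ w * (u `^ e i * u `^ w))); last first.
    rewrite mulrCA ler_wpM2l ?powR_ge0// -powRM // ?(ltW u_gt0)//; apply: le0_ger_powR => //; lra.
  rewrite -powRD ?(gt_eqF u_gt0) ?implybT// ler_wpM2l ?powR_ge0//.
  apply: (@le_trans _ _ (u `^ (-1))); last by rewrite ger_powR ?u_gt0.
  by rewrite powR_inv1 ?(ltW u_gt0)// lef_pV2 ?posrE// /u; lra.
rewrite (bigD1 i)//= [\prod_(j < k) (1 - _) `^ _](bigD1 i)//= mulrA [X in _ <= X]mulrAC.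
apply: ler_pM.
- by rewrite mulr_ge0 ?divr_ge0 ?powR_ge0// ltW.
- by apply: prodr_ge0 => j _; exact: powR_ge0.
- apply: le_trans key; rewrite ger_pMr ?divr_gt0 ?powR_gt0// -[leRHS](powRr0 2^-1).
  by rewrite ger_powR//; apply/andP; split; lra.
- apply: ler_prod => j ji; rewrite powR_ge0 /=; have /andP[? ?] := tj j ji.
  by rewrite ler_powR_norm//; [apply/andP; split|]; lra.
Qed.

End integrand_estimates.

Lemma lt0_powR_cvgy (R : realType) {T : Type} {F : set_system T} {FF : Filter F}
    (K E : R) (s : T -> R) :
  0 < K -> E < 0 -> (forall x, 0 < s x) -> s x @[x --> F] --> 0 ->
  K * s x `^ E @[x --> F] --> +oo.
Proof.
move=> K_gt0 E_lt0 s_gt0 s_cvg0; apply/cvgryPge => A.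
set B := Num.max A 1; have B_gt0 : 0 < B by rewrite lt_max ltr01 orbT.
(* s x <= (B / K) ^ (1 / E) forces K * s x ^ E >= B *)
set th := (B / K) `^ E^-1; have th_gt0 : 0 < th by rewrite powR_gt0// divr_gt0.
move: s_cvg0 => /cvgrPdist_le /(_ th th_gt0); apply: filterS => x.
rewrite sub0r normrN (ger0_norm (ltW (s_gt0 x))) => sx_le.
have : th `^ E <= s x `^ E by apply: le0_ger_powR => //; exact: ltW.
rewrite /th -powRrM mulVf ?ltr0_neq0// powRr1 ?divr_ge0 ?(ltW B_gt0) ?(ltW K_gt0)//.
by rewrite ler_pdivrMr// mulrC => BK; apply: le_trans BK; rewrite le_max lexx.
Qed.

Section bayes_factor_lower_bounds.
Variables (R : realType) (n k : nat) (a : R) (p : 'I_k -> nat).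
Hypothesis a_gt2 : 2 < a.

Local Notation e j := ((a + (p j)%:R) / 2 - 2).
Local Notation w := (- (n%:R - 1) / 2 : R).
Local Notation K :=
  (((a - 2) / 2) ^+ k * (2 `^ w * \prod_(j < k) 2^-1 `^ `|e j| * 2^-1 ^+ k)).

Lemma BF_const_gt0 : 0 < K.
Proof.
have a2_gt0 : 0 < (a - 2) / 2 by rewrite divr_gt0 ?subr_gt0.
rewrite !mulr_gt0 ?exprn_gt0 ?powR_gt0 ?invr_gt0//.
by apply: prodr_gt0 => j _; rewrite powR_gt0// invr_gt0.
Qed.

Lemma BF_ge_boxes (r : 'I_k -> R) N (c : nat -> R) (al be : nat -> nat -> R) :
  (forall l, 0 <= c l) -> (forall l j, 0 <= al l j <= be l j) -> (forall l j, be l j <= 1) ->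
  (forall t (l l' : 'I_N), in_box k (al l) (be l) t -> in_box k (al l') (be l') t -> l = l') ->
  (forall t (l : 'I_N), in_box k (al l) (be l) t -> c l <= bf_integrand n a p r t) ->
  ((((a - 2) / 2) ^+ k * \sum_(l < N) c l * \prod_(j < k) (be l j - al l j))%:E
    <= BF n a p r)%E.
Proof.
move=> c0 al_be be1 disj cF; rewrite /BF EFinM; apply: lee_wpmul2l.
  by rewrite lee_fin exprn_ge0// divr_ge0// subr_ge0 ltW.
apply: iter_int01_ge_boxes => // t.
by rewrite /bf_integrand mulr_ge0 ?powR_ge0// prodr_ge0// => j _; rewrite powR_ge0.
Qed.

Lemma BF_ge_corner (r : 'I_k -> R) : (0 < n)%N ->
  (forall j, 0 <= r j) -> \sum_(j < k) r j < 1 ->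
  ((K * (1 - \sum_(j < k) r j) `^ ((k%:R * (a - 2) + (\sum_(j < k) p j)%:R + 1 - n%:R) / 2))%:E
    <= BF n a p r)%E.
Proof.
move=> n_gt0 r0 sum_r; set s := 1 - \sum_(j < k) r j.
have s_gt0 : 0 < s by rewrite subr_gt0.
have s_le1 : s <= 1 by rewrite lerBlDr lerDl sumr_ge0.
have w_le0 : w <= 0 by rewrite ler_pdivrMr// mul0r oppr_le0 subr_ge0 ler1n.
pose c := \prod_(j < k) (2^-1 `^ `|e j| * s `^ e j) * (2 * s) `^ w.
have sum_e : \sum_(j < k) e j + w + k%:R =
    (k%:R * (a - 2) + (\sum_(j < k) p j)%:R + 1 - n%:R) / 2.
  rewrite sumrB sumr_const card_ord -mulr_suml big_split/= sumr_const card_ord natr_sum.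
  by rewrite -[a *+ k]mulr_natl -[2 *+ k]mulr_natl; field.
have prod_s : \prod_(j < k) s `^ e j = s `^ \sum_(j < k) e j.
  elim/big_rec2: _ => [|j x y _ ->]; first by rewrite powRr0.
  by rewrite -powRD // (gt_eqF s_gt0) implybT.
have two_s : (2 * s) `^ w = 2 `^ w * s `^ w by rewrite powRM// ltW.
have half_s : 1 - s / 2 - (1 - s) = 2^-1 * s by field.
have -> : K * s `^ ((k%:R * (a - 2) + (\sum_(j < k) p j)%:R + 1 - n%:R) / 2) =
    ((a - 2) / 2) ^+ k * \sum_(l < 1) c * \prod_(j < k) ((1 - s / 2) - (1 - s)).
  rewrite -sum_e !powRD ?(gt_eqF s_gt0) ?implybT// powR_mulrn ?(ltW s_gt0)//.
  rewrite big_ord1 prodr_const card_ord half_s /c.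
  rewrite [\prod_(j < k) (_ * _)]big_split/= prod_s two_s.
  by rewrite [(2^-1 * s) ^+ k]exprMn; ring.
apply: (@BF_ge_boxes r 1 (fun=> c) (fun _ _ => 1 - s) (fun _ _ => 1 - s / 2)).
- by move=> _; rewrite mulr_ge0 ?powR_ge0// prodr_ge0// => j _; rewrite mulr_ge0 ?powR_ge0.
- by move=> *; apply/andP; split; lra.
- by move=> *; lra.
- by move=> t l l' _ _; rewrite (ord1 l) (ord1 l').
- move=> t _ inb; apply: corner_box_estimate => //.
  by rewrite /s opprB addrC subrK.
Qed.

Lemma BF_ge_shells (r : 'I_k -> R) (i : 'I_k) N : a + (p i)%:R - 1 <= n%:R ->
  (forall j, 0 <= r j) -> \sum_(j < k) r j < 1 -> 1 - r i <= 2^-1 ^+ N ->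
  ((K *+ N)%:E <= BF n a p r)%E.
Proof.
move=> n_ge r0 sum_r ri_le; have := a_gt2 => a2; have pi_ge0 : 0 <= (p i)%:R :> R := ler0n _ _.
have w_le0 : w <= 0 by rewrite ler_pdivrMr// mul0r oppr_le0 subr_ge0; lra.
have ew : e i + w <= -1 by lra.
pose h l : R := 2^-1 ^+ l.
have h_gt0 l : 0 < h l by rewrite exprn_gt0// invr_gt0.
have h_le1 l : h l <= 1 by rewrite exprn_ile1// ?invr_ge0 ?invf_le1// ler1n.
have hS l : h l.+1 = h l / 2 by rewrite /h exprSr.
have h_anti l l' : (l <= l')%N -> h l' <= h l.
  by move=> ll'; rewrite ler_wiXn2l// ?invr_ge0 ?invf_le1// ler1n.
pose C := \prod_(j < k) 2^-1 `^ `|e j|.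
pose al l j := if j == val i then 1 - h l else 0.
pose be l j := if j == val i then 1 - h l / 2 else 2^-1.
have vol l : \prod_(j < k) (be l j - al l j) = h l * 2^-1 ^+ k.
  rewrite (_ : 2^-1 ^+ k = \prod_(j < k) 2^-1); last by rewrite prodr_const card_ord.
  rewrite (bigD1 i)//= [in RHS](bigD1 i)//= /al /be eqxx.
  rewrite (eq_bigr (fun=> 2^-1)); last by move=> j ji; rewrite !ifN// subr0.
  by field.
have -> : K *+ N =
    ((a - 2) / 2) ^+ k * \sum_(l < N) (2 `^ w / h l * C) * \prod_(j < k) (be l j - al l j).
  rewrite [X in _ = _ * X](eq_bigr (fun=> 2 `^ w * C * 2^-1 ^+ k)); last first.
    by move=> l _; rewrite vol; field; exact: lt0r_neq0.
  by rewrite sumr_const card_ord -mulrnAr.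
apply: (@BF_ge_boxes r N (fun l => 2 `^ w / h l * C) al be).
- by move=> l; rewrite mulr_ge0 ?divr_ge0 ?powR_ge0 ?prodr_ge0// ?ltW// => j _; rewrite powR_ge0.
- by move=> l j; rewrite /al /be; case: ifP => _; have := h_gt0 l; have := h_le1 l; lra.
- by move=> l j; rewrite /be; case: ifP => _; have := h_gt0 l; lra.
- move=> t l l' /forallP/(_ i) + /forallP/(_ i); rewrite /al /be eqxx.
  move=> /andP[lo hi] /andP[lo' hi']; apply: val_inj; apply/eqP; rewrite eqn_leq.
  by apply/andP; split; rewrite leqNgt; apply/negP => /h_anti; rewrite hS; lra.
- move=> t l inb; apply: (@shell_box_estimate _ k i) => //; first by rewrite h_gt0 h_le1.
  by rewrite -hS; apply: le_trans ri_le (h_anti _ _ _).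
Qed.

Lemma BF_cvgy_of_sum_cvg1 (r : nat -> 'I_k -> R) :
  (forall m j, 0 <= r m j) -> (forall m, \sum_(j < k) r m j < 1) ->
  \sum_(j < k) r m j @[m --> \oo] --> (1 : R) ->
  k%:R * (a - 2) + (\sum_(j < k) p j)%:R + 1 < n%:R ->
  BF n a p (r m) @[m --> \oo] --> +oo%E.
Proof.
move=> r0 sum_r sum_cvg n_gt; have := a_gt2 => a2.
have ka_ge0 : 0 <= k%:R * (a - 2) by rewrite mulr_ge0// subr_ge0 ltW.
have P_ge0 : 0 <= (\sum_(j < k) p j)%:R :> R := ler0n _ _.
have n_gt0 : (0 < n)%N by rewrite -(ltr0n R); lra.
have E_lt0 : (k%:R * (a - 2) + (\sum_(j < k) p j)%:R + 1 - n%:R) / 2 < 0 by lra.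
have s_gt0 m : 0 < 1 - \sum_(j < k) r m j by rewrite subr_gt0.
have s_cvg0 : 1 - \sum_(j < k) r m j @[m --> \oo] --> (0 : R).
  by rewrite -[X in _ --> X](subrr (1 : R)); apply: cvgB => //; exact: cvg_cst.
apply/cvgeyPge => A.
apply: filterS (cvgry_ge (lt0_powR_cvgy BF_const_gt0 E_lt0 s_gt0 s_cvg0) A) => m.
by rewrite -lee_fin => /le_trans; apply; exact: BF_ge_corner.
Qed.

Lemma BF_cvgy_of_coef_cvg1 (r : nat -> 'I_k -> R) (i : 'I_k) :
  (forall m j, 0 <= r m j) -> (forall m, \sum_(j < k) r m j < 1) ->
  r m i @[m --> \oo] --> (1 : R) -> a + (p i)%:R - 1 <= n%:R ->
  BF n a p (r m) @[m --> \oo] --> +oo%E.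
Proof.
move=> r0 sum_r ri_cvg n_ge; apply/cvgeyPge => A.
have K_gt0 := BF_const_gt0.
have [N A_le] : exists N, A <= K *+ N.
  have AK_ge0 : 0 <= Num.max A 0 / K.
    by apply: divr_ge0; [rewrite le_max lexx orbT | exact: ltW].
  exists (Num.Def.archi_bound (Num.max A 0 / K)); rewrite -mulr_natr.
  rewrite -ler_pdivrMl// (le_trans _ (ltW (archi_boundP AK_ge0)))// mulrC.
  by rewrite ler_pM2r ?invr_gt0// le_max lexx.
have h_gt0 : 0 < 2^-1 ^+ N :> R by rewrite exprn_gt0// invr_gt0.
move: ri_cvg => /cvgrPdist_le /(_ _ h_gt0); apply: filterS => m ri_near.
apply: le_trans (@BF_ge_shells (r m) i N n_ge (r0 m) (sum_r m) _); first by rewrite lee_fin.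
by apply: le_trans ri_near; exact: ler_norm.
Qed.

End bayes_factor_lower_bounds.

Theorem theorem5p1 (R : realType) (n k : nat) (a : R) (p : 'I_k -> nat) :
  2 < a <= 4 ->
  (forall j, (0 < p j)%N) ->
  forall r : nat -> 'I_k -> R,
    (forall m j, 0 <= r m j) ->
    (forall m, \sum_(j < k) r m j < 1) ->
    ( ((\sum_(j < k) r m j) @[m --> \oo] --> (1%R : R)
        /\ k%:R * (a - 2) + (\sum_(j < k) p j)%:R + 1 < n%:R)
      \/
      (exists i : 'I_k, r m i @[m --> \oo] --> (1%R : R)
        /\ a + (p i)%:R - 1 <= n%:R) ) ->
    BF n a p (r m) @[m --> \oo] --> +oo%E.
Proof.
move=> /andP[a_gt2 _] _ r r0 sum_r [[sum_cvg n_gt]|[i [ri_cvg n_ge]]].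
- exact: BF_cvgy_of_sum_cvg1.
- exact: BF_cvgy_of_coef_cvg1 ri_cvg n_ge.
Qed.
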